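(* Let $p,q$ be distributions on $\mathbb{R}$ and $\epsilon\in[0,1)$ such that $\sup_{t\in\mathbb{R}}|\mathbb{P}_{X\sim p}(X\ge t)-\mathbb{P}_{Y\sim q}(Y\ge t)|\le\epsilon$. Then there exist distributions $r_p\le\frac{p}{1-\epsilon}$ and $r_q\le\frac{q}{1-\epsilon}$ such that $r_p$ is stochastically dominated by $r_q$ (i.e. $\mathbb{P}_{r_p}(X\le t)\ge\mathbb{P}_{r_q}(X\le t)$ for all $t$); in particular $\mathbb{E}_{r_p}[X]\le\mathbb{E}_{r_q}[X]$ whenever these expectations exist.
   Context: For distributions $r,p$ and $\epsilon\in[0,1)$, $r\le\frac{p}{1-\epsilon}$ means $r$ is a probability distribution with $r(A)\le p(A)/(1-\epsilon)$ for all measurable $A$. *)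

(* distributions on R are probability measures on the
   Borel sigma-algebra of R : realType. *)
From HB Require Import structures.
From mathcomp Require Import all_boot all_order all_algebra.
From mathcomp Require Import all_classical all_reals all_analysis.

(* Put c = 1 - eps.  Comparing the tails [P(X >= s)] for s > t and letting
   s decrease to t turns the hypothesis into F_q <= F_p + eps for the cdfs.
   Clamp F_p / c and (F_q - eps) / c into [0, 1]: the results are cdfs of
   probabilities r_p, r_q with F_{r_q} <= F_{r_p}, because clamping is
   monotone.  Clamping is also 1-Lipschitz, so every increment of the clamped
   cdf is at most the corresponding increment of F / c; hence the
   Lebesgue-Stieltjes measure of the former is at most P / c.  Finally the
   ordering of the cdfs orders the means through
   E[X] = int_0^oo (1 - F) - int_-oo^0 F. *)

From HB Require Import structures.
From mathcomp Require Import all_boot all_order all_algebra.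
From mathcomp Require Import all_classical all_reals all_analysis.
From mathcomp Require Import ring lra.
Import Order.TTheory GRing.Theory Num.Theory.
Import numFieldTopology.Exports.
Local Open Scope classical_set_scope.
Local Open Scope ring_scope.

Section lebesgue_stieltjes_increments.
Context {R : realType}.
Local Open Scope ereal_scope.

Lemma lebesgue_stieltjes_measure_itv_oc (f : cumulative R R) (a b : R) :
  (a <= b)%R -> lebesgue_stieltjes_measure f `]a, b]%classic = (f b - f a)%:E.
Proof.
move=> ab; rewrite /lebesgue_stieltjes_measure /measure_extension/=.
by rewrite measurable_mu_extE/= ?wlength_itv_bnd//; exact: is_ocitv.
Qed.

Lemma lebesgue_stieltjes_measure_eq (f : cumulative R R)
    (mu : {measure set (measurableTypeR R) -> \bar R}) :
  (forall a b : R, (a <= b)%R -> mu `]a, b]%classic = (f b - f a)%:E) ->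
  forall A, measurable A -> lebesgue_stieltjes_measure f A = mu A.
Proof.
move=> muE; apply: lebesgue_stieltjes_measure_unique => _ [[a b] _ <-] /=.
have [ab|ba] := leP a b; first by rewrite lebesgue_stieltjes_measure_itv_oc// -muE.
by rewrite set_itv_ge ?measure0// bnd_simp -leNgt ltW.
Qed.

Section dominated_increments.
Variables f h : cumulative R R.
Hypothesis le_incr : forall a b : R, (a <= b)%R -> (f b - f a <= h b - h a)%R.

Let g (t : R) : R := h t - f t.

Let g_nd : {homo g : a b / (a <= b)%R}.
Proof. by move=> a b /le_incr; rewrite /g; lra. Qed.

Let g_rc : right_continuous g.
Proof. by move=> t; apply: cvgB; exact: cumulative_is_right_continuous. Qed.

#[local] HB.instance Definition _ := isCumulative.Build R _ R g g_nd g_rc.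

Lemma lebesgue_stieltjes_measure_le_incr A : measurable A ->
  lebesgue_stieltjes_measure f A <= lebesgue_stieltjes_measure h A.
Proof.
move=> mA.
pose mu := measure_add (lebesgue_stieltjes_measure f)
                       (lebesgue_stieltjes_measure g).
have muE B : mu B = lebesgue_stieltjes_measure f B + lebesgue_stieltjes_measure g B.
  exact: measure_addE.
rewrite (@lebesgue_stieltjes_measure_eq h mu)//= => [|a b ab].
  by rewrite -[leRHS]/(mu A) muE leeDl.
have gE : lebesgue_stieltjes_measure g `]a, b] = (h b - f b - (h a - f a))%:E.
  exact: lebesgue_stieltjes_measure_itv_oc.
rewrite -[LHS]/(mu _) muE gE lebesgue_stieltjes_measure_itv_oc// -EFinD.
by congr EFin; lra.
Qed.

End dominated_increments.
End lebesgue_stieltjes_increments.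

Section real_cdf.
Context {R : realType} (P : probability R R).
Local Open Scope ereal_scope.

Definition real_cdf (t : R) : R := fine (P `]-oo, t]%classic).

Let idRR : R -> R := idfun.
#[local] HB.instance Definition _ :=
  @isMeasurableFun.Build _ _ _ _ idRR (@measurable_id _ _ setT).

Lemma real_cdfE t : P `]-oo, t]%classic = (real_cdf t)%:E.
Proof. by rewrite /real_cdf fineK// fin_num_measure. Qed.

Let cdf_idE t : cdf (idRR : {RV P >-> R}) t = (real_cdf t)%:E.
Proof. by rewrite -real_cdfE. Qed.

Lemma real_cdf_nondecreasing : {homo real_cdf : a b / (a <= b)%R}.
Proof. by move=> a b ab; rewrite -lee_fin -!cdf_idE cdf_nondecreasing. Qed.

Lemma real_cdf_right_continuous : right_continuous real_cdf.
Proof.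
by move=> t; apply: fine_cvg; rewrite -cdf_idE; exact: cdf_right_continuous.
Qed.

Local Close Scope ereal_scope.

Lemma cvg_real_cdfNy0 : real_cdf @ -oo --> (0 : R).
Proof.
exact: (fine_cvg (cvg_cdfNy0 (idRR : {RV P >-> R}))).
Qed.

Lemma cvg_real_cdfy1 : real_cdf @ +oo --> (1 : R).
Proof.
exact: (fine_cvg (cvg_cdfy1 (idRR : {RV P >-> R}))).
Qed.

Lemma measure_itv_oc_real_cdf a b : a <= b ->
  P `]a, b]%classic = (real_cdf b - real_cdf a)%:E.
Proof.
move=> ab.
have -> : `]a, b]%classic = `]-oo, b] `\` `]-oo, a].
  by rewrite -[RHS]setCK setCD setCitvl setUC -[LHS]setCK setCitv.
rewrite measureD//; last by rewrite -ge0_fin_numE// fin_num_measure.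
rewrite setIidr; last by apply: subset_itvl; rewrite bnd_simp.
by rewrite EFinB /real_cdf !fineK ?fin_num_measure.
Qed.

End real_cdf.

Definition scaled_cdf {R : realType} (P : probability R R) (k : {nonneg R})
  (t : R) : R := k%:num * real_cdf P t.

Section scaled_cdf.
Context {R : realType} (P : probability R R) (k : {nonneg R}).

Lemma scaled_cdf_nondecreasing : {homo scaled_cdf P k : a b / a <= b}.
Proof. by move=> a b ab; rewrite ler_wpM2l// real_cdf_nondecreasing. Qed.

Lemma scaled_cdf_right_continuous : right_continuous (scaled_cdf P k).
Proof. by move=> t; apply: cvgMl_tmp; exact: real_cdf_right_continuous. Qed.

Lemma cvg_scaled_cdfNy : scaled_cdf P k @ -oo --> (0 : R).
Proof.
by rewrite -(mulr0 k%:num); apply: cvgMl_tmp; exact: cvg_real_cdfNy0.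
Qed.

Lemma cvg_scaled_cdfy : scaled_cdf P k @ +oo --> k%:num.
Proof.
by rewrite -[X in _ --> X](mulr1 k%:num); apply: cvgMl_tmp; exact: cvg_real_cdfy1.
Qed.

End scaled_cdf.

HB.instance Definition _ (R : realType) (P : probability R R) (k : {nonneg R}) :=
  isCumulative.Build R _ R (scaled_cdf P k)
    (scaled_cdf_nondecreasing P k) (scaled_cdf_right_continuous P k).

Section lebesgue_stieltjes_scaled_cdf.
Context {R : realType} (P : probability R R) (k : {nonneg R}).
Local Open Scope ereal_scope.

Let idRT : R -> measurableTypeR R := idfun.
#[local] HB.instance Definition _ :=
  @isMeasurableFun.Build _ _ _ _ idRT (@measurable_id _ _ setT).

Lemma lebesgue_stieltjes_scaled_cdf A : measurable A ->
  lebesgue_stieltjes_measure (scaled_cdf P k) A = k%:num%:E * P A.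
Proof.
apply: (@lebesgue_stieltjes_measure_eq _ _ (mscale k (distribution P idRT))).
move=> a b ab; rewrite -[LHS]/(k%:num%:E * P `]a, b]%classic).
by rewrite measure_itv_oc_real_cdf// -EFinM mulrBr.
Qed.

End lebesgue_stieltjes_scaled_cdf.

Definition clamp01 {R : realDomainType} (x : R) : R := Num.max 0 (Num.min 1 x).

Section clamp01.
Context {R : realDomainType}.
Implicit Types x y : R.

Lemma clamp01_le0 x : x <= 0 -> clamp01 x = 0.
Proof. by move=> x0; rewrite /clamp01 min_r ?max_l// (le_trans x0). Qed.

Lemma clamp01_ge1 x : 1 <= x -> clamp01 x = 1.
Proof. by move=> x1; rewrite /clamp01 min_l ?max_r. Qed.

Lemma clamp01_id x : 0 <= x <= 1 -> clamp01 x = x.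
Proof. by case/andP=> x0 x1; rewrite /clamp01 min_r ?max_r. Qed.

Lemma clamp01_cases x : [\/ x <= 0 /\ clamp01 x = 0, 1 <= x /\ clamp01 x = 1
  | (0 <= x <= 1) /\ clamp01 x = x].
Proof.
have [x0|x0] := leP x 0; first by apply: Or31; rewrite clamp01_le0.
have [x1|x1] := leP 1 x; first by apply: Or32; rewrite clamp01_ge1.
by apply: Or33; rewrite clamp01_id ?ltW ?x0 ?x1.
Qed.

Lemma clamp01_nondecreasing : {homo @clamp01 R : x y / x <= y}.
Proof. by move=> x y xy; rewrite le_max2// le_min2. Qed.

Lemma clamp01_sub_le x y : x <= y -> clamp01 y - clamp01 x <= y - x.
Proof.
move=> xy.
by case: (clamp01_cases x) => -[+ ->]; case: (clamp01_cases y) => -[+ ->]; lra.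
Qed.

End clamp01.

Lemma clamp01_continuous {R : realType} : continuous (@clamp01 R).
Proof.
by move=> x; exact: (continuous_max (cvg_cst _) (continuous_min (cvg_cst _) cvg_id)).
Qed.

Definition clamped_cdf {R : realType} (f : R -> R) (s t : R) : R :=
  clamp01 (f t - s).

Lemma cvg_clamped_cdf {R : realType} (F : set_system R) {FF : Filter F}
    (f : R -> R) (l s : R) :
  f @ F --> l -> clamped_cdf f s @ F --> clamp01 (l - s).
Proof.
move=> fl.
exact: (cvg_comp _ _ (cvgB fl (cvg_cst s)) (clamp01_continuous (l - s))).
Qed.

Section clamped_cdf.
Context {R : realType} (f : cumulative R R) (s : R).

Lemma clamped_cdf_nondecreasing : {homo clamped_cdf f s : a b / a <= b}.
Proof.
by move=> a b ab; apply: clamp01_nondecreasing; rewrite lerD2r cumulative_is_nondecreasing.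
Qed.

Lemma clamped_cdf_right_continuous : right_continuous (clamped_cdf f s).
Proof. by move=> t; apply: cvg_clamped_cdf; exact: cumulative_is_right_continuous. Qed.

End clamped_cdf.

HB.instance Definition _ (R : realType) (f : cumulative R R) (s : R) :=
  isCumulative.Build R _ R (clamped_cdf f s)
    (clamped_cdf_nondecreasing f s) (clamped_cdf_right_continuous f s).

Lemma lebesgue_stieltjes_clamped_cdf_le {R : realType} (f : cumulative R R) s A :
  measurable A ->
  (lebesgue_stieltjes_measure (clamped_cdf f s) A <= lebesgue_stieltjes_measure f A)%E.
Proof.
apply: lebesgue_stieltjes_measure_le_incr => a b ab.
have fab : f a - s <= f b - s by rewrite lerD2r cumulative_is_nondecreasing.
by apply: le_trans (clamp01_sub_le _ _ fab) _; lra.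
Qed.

Section trimmed_distribution.
Context {R : realType} (P : probability R R) (k : {nonneg R}) (s : R).
Hypotheses (s_ge0 : 0 <= s) (s_le : s + 1 <= k%:num).

Let trimmed_cdf_Ny0 : clamped_cdf (scaled_cdf P k) s @ -oo --> (0 : R).
Proof.
rewrite -(@clamp01_le0 _ (0 - s)); last by rewrite sub0r oppr_le0.
exact: cvg_clamped_cdf (cvg_scaled_cdfNy P k).
Qed.

Let trimmed_cdf_y1 : clamped_cdf (scaled_cdf P k) s @ +oo --> (1 : R).
Proof.
rewrite -(@clamp01_ge1 _ (k%:num - s)); last by rewrite lerBrDl.
exact: cvg_clamped_cdf (cvg_scaled_cdfy P k).
Qed.

#[local] HB.instance Definition _ :=
  isCumulativeBounded.Build R 0 1 (clamped_cdf (scaled_cdf P k) s)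
    trimmed_cdf_Ny0 trimmed_cdf_y1.

Let idTR : measurableTypeR R -> R := idfun.
#[local] HB.instance Definition _ :=
  @isMeasurableFun.Build _ _ _ _ idTR (@measurable_id _ _ setT).

Definition trimmed_distribution : probability R R :=
  distribution (lebesgue_stieltjes_measure (clamped_cdf (scaled_cdf P k) s)) idTR.

Local Open Scope ereal_scope.

Lemma trimmed_distribution_le A : measurable A ->
  trimmed_distribution A <= k%:num%:E * P A.
Proof.
move=> mA; rewrite -lebesgue_stieltjes_scaled_cdf//.
exact: lebesgue_stieltjes_clamped_cdf_le.
Qed.

Lemma trimmed_distribution_cdf t : trimmed_distribution [set x | (x <= t)%R] =
  (clamp01 (k%:num * real_cdf P t - s))%:E.
Proof.
have -> : [set x | (x <= t)%R] = `]-oo, t]%classic.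
  by apply/seteqP; split => x /=; rewrite in_itv.
exact: cdf_lebesgue_stieltjes_id.
Qed.

End trimmed_distribution.

Section tail_distance.
Context {R : realType}.

Lemma probability_geE (P : probability R R) s :
  P [set x | s <= x] = (1 - fine (P `]-oo, s[%classic))%:E :> \bar R.
Proof.
rewrite EFinB fineK ?fin_num_measure// -probability_setC//; congr (P _).
by apply/seteqP; split => x /=; rewrite in_itv /= leNgt => /negP.
Qed.

Lemma real_cdf_le_tail_dist (p q : probability R R) (eps : R) :
  (forall t : R,
     `| p [set x | (t <= x)%R] - q [set x | (t <= x)%R] | <= eps%:E)%E ->
  forall t, real_cdf q t <= real_cdf p t + eps.
Proof.
move=> dpq t.
have cdf_le_lt (P : probability R R) s : t < s ->
    real_cdf P t <= fine (P `]-oo, s[%classic).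
  move=> ts; rewrite fine_le ?fin_num_measure//; apply: le_measure; rewrite ?inE//.
  by apply: subset_itvl; rewrite bnd_simp.
have lt_le_cdf (P : probability R R) s :
    fine (P `]-oo, s[%classic) <= real_cdf P s.
  rewrite fine_le ?fin_num_measure//; apply: le_measure; rewrite ?inE//.
  by apply: subset_itvl; rewrite bnd_simp.
have cdf_le_right s : t < s -> real_cdf q t - eps <= real_cdf p s.
  move=> ts; rewrite lerBlDr; have := dpq s.
  rewrite !probability_geE -EFinB abse_EFin lee_fin ler_norml => /andP[_ dpq_s].
  by have := cdf_le_lt q s ts; have := lt_le_cdf p s; lra.
have : real_cdf q t - eps <= lim (real_cdf p x @[x --> t^'+]).
  apply: limr_ge; first exact: cvgP (real_cdf_right_continuous p t).
  by near=> s; apply: cdf_le_right; near: s; exact: nbhs_right_gt.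
by rewrite (cvg_lim _ (real_cdf_right_continuous p t))// lerBlDr.
Unshelve. all: by end_near. Qed.

End tail_distance.

Section stochastic_dominance.
Context {R : realType}.
Local Open Scope ereal_scope.

Let idRR : R -> R := idfun.
#[local] HB.instance Definition _ :=
  @isMeasurableFun.Build _ _ _ _ idRR (@measurable_id _ _ setT).

(* [R] and [measurableTypeR R] carry the same sets under different displays;
   [expectation_cdf_ccdf] integrates over the latter. *)
Let measurable_fun_measurableTypeR d (U : sigmaRingType d) (f : R -> U)
    (D : set (measurableTypeR R)) :
  measurable_fun [set: R] f -> measurable_fun D f.
Proof.
move=> mf mD B mB; apply: measurableI mD _.
by rewrite -[X in measurable X]setTI; exact: mf.
Qed.

Lemma integral_id_le_of_cdf_ge (P Q : probability R R) :
  (forall t : R, Q [set x | (x <= t)%R] <= P [set x | (x <= t)%R]) ->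
  P.-integrable setT (fun x => x%:E) -> Q.-integrable setT (fun x => x%:E) ->
  \int[P]_x x%:E <= \int[Q]_x x%:E.
Proof.
move=> QP iP iQ.
have cdfE (S : probability R R) t :
    cdf (idRR : {RV S >-> R}) t = S [set x | (x <= t)%R].
  by congr (S _); apply/seteqP; split => x /=; rewrite in_itv.
have -> : \int[P]_x x%:E = 'E_P[idRR : {RV P >-> R}] by rewrite expectation_def.
have -> : \int[Q]_x x%:E = 'E_Q[idRR : {RV Q >-> R}] by rewrite expectation_def.
rewrite !expectation_cdf_ccdf; [|exact/Lfun1_integrable..].
apply: leeB; apply: ge0_le_integral => //.
- by apply: measurable_fun_measurableTypeR; exact: ccdf_measurable.
- by apply: measurable_fun_measurableTypeR; exact: ccdf_measurable.
- by move=> x _; rewrite !ccdf_1_cdf !cdfE leeB.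
- by apply: measurable_fun_measurableTypeR; exact: cdf_measurable.
- by apply: measurable_fun_measurableTypeR; exact: cdf_measurable.
- by move=> x _; rewrite !cdfE.
Qed.

End stochastic_dominance.

Local Open Scope ereal_scope.

Theorem lemma3p6 (R : realType) (p q : probability R R) (eps : R)
  (eps_ge0 : (0 <= eps)%R) (eps_lt1 : (eps < 1)%R)
  (hsup : forall t : R,
     `| p [set x | (t <= x)%R] - q [set x | (t <= x)%R] | <= eps%:E) :
  exists rp rq : probability R R,
    (forall A : set R, measurable A -> rp A <= ((1 - eps)^-1)%:E * p A) /\
    (forall A : set R, measurable A -> rq A <= ((1 - eps)^-1)%:E * q A) /\
    (forall t : R, rq [set x | (x <= t)%R] <= rp [set x | (x <= t)%R]) /\
    (rp.-integrable setT (fun x => x%:E) -> rq.-integrable setT (fun x => x%:E) ->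
       \int[rp]_x x%:E <= \int[rq]_x x%:E).
Proof.
have c_gt0 : (0 < 1 - eps)%R by rewrite subr_gt0.
have k_ge0 : (0 <= (1 - eps)^-1)%R by rewrite invr_ge0 ltW.
pose k : {nonneg R} := NngNum k_ge0.
have k_eps : (k%:num * eps + 1 = k%:num)%R.
  by rewrite /=; field; rewrite lt0r_neq0.
have p_shift : (0 + 1 <= k%:num)%R.
  by rewrite -k_eps add0r lerDr mulr_ge0.
have q_shift : (k%:num * eps + 1 <= k%:num)%R by rewrite k_eps.
pose rp := trimmed_distribution p k 0 (lexx 0) p_shift.
have q_shift_ge0 : (0 <= k%:num * eps)%R by rewrite mulr_ge0.
pose rq := trimmed_distribution q k _ q_shift_ge0 q_shift.
have rq_le_rp (t : R) : rq [set x | (x <= t)%R] <= rp [set x | (x <= t)%R].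
  rewrite !trimmed_distribution_cdf lee_fin; apply: clamp01_nondecreasing.
  rewrite subr0 -mulrBr ler_wpM2l// lerBlDr.
  exact: real_cdf_le_tail_dist.
exists rp, rq; split; [|split; [|split]].
- exact: trimmed_distribution_le.
- exact: trimmed_distribution_le.
- exact: rq_le_rp.
- exact: integral_id_le_of_cdf_ge.
Qed.
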